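(* Let $A=(a(x),dF(x))$ and $B=(b(x),dF(x))$ be games. If $g(p)$ exists for each $p\in[0,1]$, then $g$ is concave on $[0,1]$.
   Context: A game is a pair $(a(x),dF(x))$ with $dF$ a probability measure on $\mathbb{R}$ and $a\ge0$ measurable with finite positive integral. A real $r$ is fixed. For $p\in[0,1]$ put $c_p(x):=pa(x)+(1-p)b(x)$. $g(p)$ denotes the value $u>0$ such that for some $t_u$ (with $0<t_u\le1$) the system $\exp\big(\int\log(\frac{c_p(x)}{u}t_u-t_u+1)\,dF(x)\big)=e^r$, $\int\frac{c_p(x)-u}{c_p(x)t_u-ut_u+u}\,dF(x)=0$ holds; such a solution is unique when it exists, and ''$g(p)$ exists'' means it exists. *)

From HB Require Import structures.
From mathcomp Require Import all_boot all_order all_algebra.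
From mathcomp Require Import all_classical all_reals all_analysis.
Set Implicit Arguments. Unset Strict Implicit. Unset Printing Implicit Defensive.
Import Order.TTheory GRing.Theory Num.Theory.
Local Open Scope classical_set_scope.
Local Open Scope ring_scope.

Definition game (R : realType) (F : probability R R) (a : R -> R) : Prop :=
  measurable_fun setT a /\ (forall x, 0 <= a x) /\
  (0 < \int[F]_x (a x)%:E)%E /\ (\int[F]_x (a x)%:E < +oo)%E.

Definition cp (R : realType) (a b : R -> R) (p : R) (x : R) : R :=
  p * a x + (1 - p) * b x.

Definition elog (R : realType) (y : R) : \bar R :=
  if 0 < y then (ln y)%:E else -oo%E.

Definition g_sol (R : realType) (F : probability R R) (a b : R -> R) (r p u : R)
  : Prop :=
  0 < u /\ exists t : R, 0 < t <= 1 /\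
    expeR (\int[F]_x elog (cp a b p x / u * t - t + 1)) = (expR r)%:E /\
    (\int[F]_x ((cp a b p x - u) / (cp a b p x * t - u * t + u))%:E = 0)%E.

(* g(p): the (unique, when it exists) solution u; chosen via xget *)
Definition g (R : realType) (F : probability R R) (a b : R -> R) (r p : R) : R :=
  xget 0 [set u | g_sol F a b r p u].

Definition concave_on01 (R : realType) (f : R -> R) : Prop :=
  forall x y l : R, 0 <= x <= 1 -> 0 <= y <= 1 -> 0 <= l <= 1 ->
    l * f x + (1 - l) * f y <= f (l * x + (1 - l) * y).

From HB Require Import structures.
From mathcomp Require Import all_boot all_order all_algebra.
From mathcomp Require Import all_classical all_reals all_analysis.
From mathcomp Require Import measurable_realfun ring lra.

(* Write Z_p = 1 - t + t c_p / u for the wealth factor of the system defining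
   g(p) = u: its equations say E[ln Z_p] = r and, after clearing denominators,
   E[1 / Z_p] = 1.  For two solutions (p, u, t) and (p', u', t'), the
   inequality ln y <= y - 1 applied to Z_p' / Z_p gives
     r = E[ln Z_p'] <= E[ln Z_p] + E[Z_p' / Z_p] - 1 = r - t' + (t' / u') E[c_p' / Z_p],
   i.e. g(p') <= E[c_p' / Z_p], with equality when p' = p.  Hence g is the
   lower envelope of the affine functions p' |-> E[c_p' / Z_p], so it is
   concave. *)

Set Implicit Arguments.
Unset Strict Implicit.
Unset Printing Implicit Defensive.

Import Order.TTheory GRing.Theory Num.Theory.
Local Open Scope ring_scope.

Lemma measurable_inv (R : realType) : measurable_fun [set: R] (@GRing.inv R).
Proof.
have mexpNln : measurable_fun [set: R] (fun x : R => expR (- ln x)).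
  by apply: measurableT_comp => //; apply: measurableT_comp.
have -> : @GRing.inv R = fun x => if 0 < x then expR (- ln x)
    else if x < 0 then - expR (- ln (- x)) else 0.
  apply: funext => x; case: ltgtP => hx.
  - by rewrite expRN lnK ?posrE.
  - by rewrite expRN lnK ?posrE ?oppr_gt0 // invrN opprK.
  - by rewrite -hx invr0.
apply: measurable_fun_ifT; [exact: measurable_fun_ltr | exact: mexpNln |].
apply: measurable_fun_ifT; [exact: measurable_fun_ltr | | exact: measurable_cst].
by apply: measurableT_comp => //; exact: (measurableT_comp mexpNln).
Qed.

Lemma ln_le_subr1 (R : realType) (x : R) : 0 < x -> ln x <= x - 1.
Proof.
move=> x0; have := expR_ge1Dx (ln x); rewrite lnK ?posrE //; lra.
Qed.

Section integrable_fin_num.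
Context d (T : measurableType d) (R : realType).
Variable mu : {measure set T -> \bar R}.

Lemma fin_num_integrable (f : T -> \bar R) : measurable_fun [set: T] f ->
  (\int[mu]_x f x \is a fin_num)%E -> mu.-integrable [set: T] f.
Proof.
move=> mf; rewrite integralE fin_numB => /andP[hp hn].
apply/integrableP; split => //.
rewrite (_ : (fun x => `|f x|%E) = (f^\+ \+ f^\-)%E); last exact: fune_abse.
rewrite ge0_integralD //; last 2 first.
- exact: measurable_funepos.
- exact: measurable_funeneg.
by rewrite ltey_eq fin_numD hp hn.
Qed.

End integrable_fin_num.

Section expectation_extra.
Context d (T : measurableType d) (R : realType) (P : probability T R).
Local Open Scope ereal_scope.

Lemma fin_expectation_Lfun1 (f : T -> R) : measurable_fun [set: T] f ->
  'E_P[f] \is a fin_num -> f \in Lfun P 1.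
Proof.
move=> mf; rewrite unlock => hf.
by apply/Lfun1_integrable/fin_num_integrable => //; exact/measurable_EFinP.
Qed.

Lemma ae_eq_expectation (f g : T -> R) :
  measurable_fun [set: T] f -> measurable_fun [set: T] g ->
  {ae P, forall x, f x = g x} -> 'E_P[f] = 'E_P[g].
Proof.
move=> mf mg fg; rewrite unlock; apply: ae_eq_integral => //.
- exact/measurable_EFinP.
- exact/measurable_EFinP.
- by apply: filterS fg => x ->.
Qed.

Lemma le_expectation (f g : T -> R) : f \in Lfun P 1 -> g \in Lfun P 1 ->
  (forall x, (f x <= g x)%R) -> 'E_P[f] <= 'E_P[g].
Proof.
move=> /Lfun1_integrable intf /Lfun1_integrable intg fg.
by rewrite unlock; apply: le_integral => // x _; rewrite lee_fin.
Qed.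

Lemma ge0_expectation_conv (f g : T -> R) (l : R) :
  measurable_fun [set: T] f -> measurable_fun [set: T] g ->
  (forall x, 0 <= f x)%R -> (forall x, 0 <= g x)%R -> (0 <= l <= 1)%R ->
  'E_P[l \o* f \+ (1 - l) \o* g] = l%:E * 'E_P[f] + (1 - l)%:E * 'E_P[g].
Proof.
move=> mf mg f0 g0 /andP[l0 l1]; have l'0 : (0 <= 1 - l)%R by rewrite subr_ge0.
have mfE : measurable_fun [set: T] (EFin \o f) by exact/measurable_EFinP.
have mgE : measurable_fun [set: T] (EFin \o g) by exact/measurable_EFinP.
rewrite unlock; under eq_integral do rewrite /= EFinD !EFinM.
rewrite ge0_integralD //; last 4 first.
- by move=> x _; rewrite -EFinM lee_fin mulr_ge0.
- exact: emeasurable_funM.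
- by move=> x _; rewrite -EFinM lee_fin mulr_ge0.
- exact: emeasurable_funM.
rewrite !ge0_integralZr // => [|x _|x _]; rewrite ?lee_fin //.
by rewrite muleC [X in _ + X]muleC.
Qed.

End expectation_extra.

Section wealth.
Context d (T : measurableType d) (R : realType) (P : probability T R).
Implicit Types (c : T -> R) (r u t : R).

Definition wealth c u t x := c x / u * t - t + 1.

(* Nonpositive values of [wealth] are replaced by 1, so that [ln] and [^-1]
   behave; at a solution of the system this changes [wealth] only on a null set. *)
Definition pos_wealth c u t x := if 0 < wealth c u t x then wealth c u t x else 1.

Lemma pos_wealth_gt0 c u t x : 0 < pos_wealth c u t x.
Proof. by rewrite /pos_wealth; case: ifP. Qed.

Section measurability.
Variables (c : T -> R) (u t : R).
Hypothesis mc : measurable_fun [set: T] c.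

Lemma measurable_wealth : measurable_fun [set: T] (wealth c u t).
Proof.
apply: measurable_funD => //; apply: measurable_funB => //.
by do 2 apply: measurable_funM => //.
Qed.

Lemma measurable_pos_wealth : measurable_fun [set: T] (pos_wealth c u t).
Proof.
apply: measurable_fun_ifT => //; last exact: measurable_wealth.
exact: measurable_fun_ltr measurable_wealth.
Qed.

Lemma measurable_inv_pos_wealth :
  measurable_fun [set: T] (GRing.inv \o pos_wealth c u t).
Proof. exact: measurableT_comp (@measurable_inv R) measurable_pos_wealth. Qed.

End measurability.

Definition wealth_solution r c u t : Prop :=
  [/\ {ae P, forall x, 0 < wealth c u t x},
      @ln R \o pos_wealth c u t \in Lfun P 1,
      ('E_P[@ln R \o pos_wealth c u t] = r%:E)%E &
      ('E_P[GRing.inv \o pos_wealth c u t] = 1)%E].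

Lemma log_wealth_solution r c u t : measurable_fun [set: T] c ->
  expeR (\int[P]_x elog (wealth c u t x)) = (expR r)%:E ->
  [/\ {ae P, forall x, 0 < wealth c u t x},
      @ln R \o pos_wealth c u t \in Lfun P 1 &
      ('E_P[@ln R \o pos_wealth c u t] = r%:E)%E].
Proof.
move=> mc hE.
have hr : (\int[P]_x elog (wealth c u t x) = r%:E)%E by apply: expeR_inj; rewrite hE.
have mw := measurable_wealth u t mc.
have melog : measurable_fun [set: T] (fun x => elog (wealth c u t x)).
  apply: measurable_fun_ifT; first exact: measurable_fun_ltr mw.
    by apply/measurable_EFinP; exact: measurableT_comp.
  exact: measurable_cst.
have w_gt0 : {ae P, forall x, 0 < wealth c u t x}.
  have /integrable_ae : P.-integrable [set: T] (fun x => elog (wealth c u t x)).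
    by apply: fin_num_integrable => //; rewrite hr.
  by move=> /(_ measurableT); apply: filterS => x /(_ I); rewrite /elog; case: ifP.
have mlnw : measurable_fun [set: T] (@ln R \o pos_wealth c u t).
  exact: measurableT_comp (measurable_pos_wealth u t mc).
have Eln : ('E_P[@ln R \o pos_wealth c u t] = r%:E)%E.
  rewrite unlock -hr; apply: ae_eq_integral => //; first exact/measurable_EFinP.
  by apply: filterS w_gt0 => x wx _; rewrite /elog /pos_wealth /= wx.
by split => //; apply: fin_expectation_Lfun1 => //; rewrite Eln.
Qed.

Lemma inv_wealth_expectation c u t : measurable_fun [set: T] c -> 0 < u -> 0 < t ->
  {ae P, forall x, 0 < wealth c u t x} ->
  (\int[P]_x ((c x - u) / (c x * t - u * t + u))%:E = 0)%E ->
  ('E_P[GRing.inv \o pos_wealth c u t] = 1)%E.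
Proof.
move=> mc u0 t0 w_gt0 hfoc.
pose foc x := (c x - u) / (c x * t - u * t + u).
have mfoc : measurable_fun [set: T] foc.
  apply: measurable_funM; first exact: measurable_funB.
  apply: measurableT_comp; first exact: measurable_inv.
  by apply: measurable_funD => //; apply: measurable_funB => //; exact: measurable_funM.
have Efoc : ('E_P[foc] = 0)%E by rewrite unlock.
have focL : foc \in Lfun P 1 by apply: fin_expectation_Lfun1; rewrite // Efoc.
rewrite (@ae_eq_expectation _ _ _ _ _ (cst 1 \- t \o* foc)).
- rewrite expectationB ?expectationZl ?expectation_cst ?Efoc ?mule0 ?sube0 //.
    exact: Lfun_cst.
  exact: Lfun_scale.
- exact: measurable_inv_pos_wealth.
- by apply: measurable_funB => //; exact: measurable_funM.
apply: filterS w_gt0 => x wx; rewrite /= /pos_wealth wx /foc.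
have cE : c x = u * (wealth c u t x + t - 1) / t.
  by rewrite /wealth; field; rewrite !lt0r_neq0.
rewrite cE; set w := wealth c u t x; field.
have -> : u * (w + t - 1) - u * t + u = u * w by ring.
by rewrite mulf_neq0 ?(lt0r_neq0 u0) ?(lt0r_neq0 t0) ?(lt0r_neq0 wx).
Qed.

Lemma wealth_solution_of_system r c u t :
  measurable_fun [set: T] c -> 0 < u -> 0 < t ->
  expeR (\int[P]_x elog (wealth c u t x)) = (expR r)%:E ->
  (\int[P]_x ((c x - u) / (c x * t - u * t + u))%:E = 0)%E ->
  wealth_solution r c u t.
Proof.
move=> mc u0 t0 hE hfoc; have [w_gt0 lnL Eln] := log_wealth_solution mc hE.
by split => //; exact: inv_wealth_expectation.
Qed.

End wealth.

Section wealth_bounds.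
Context d (T : measurableType d) (R : realType) (P : probability T R).
Variables (r : R) (c : T -> R) (u t : R).
Hypotheses (mc : measurable_fun [set: T] c) (u0 : 0 < u) (t0 : 0 < t).
Hypothesis sol : wealth_solution P r c u t.

Let V := GRing.inv \o pos_wealth c u t.

Let mV : measurable_fun [set: T] V.
Proof. exact: measurable_inv_pos_wealth. Qed.

Let VL : V \in Lfun P 1.
Proof. by case: sol => _ _ _ EV; apply: fin_expectation_Lfun1; rewrite // EV. Qed.

Lemma expectation_div_pos_wealth : ('E_P[c \* V] = u%:E)%E.
Proof.
case: sol => w_gt0 _ _ EV.
rewrite (@ae_eq_expectation _ _ _ _ _ ((u / t) \o* (cst 1 \+ (t - 1) \o* V))).
- have oneL : cst 1 \in Lfun P 1 by exact: Lfun_cst.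
  have VtL : (t - 1) \o* V \in Lfun P 1 by exact: Lfun_scale.
  rewrite expectationZl ?rpredD // expectationD // expectationZl // expectation_cst EV.
  by rewrite mule1 -EFinD -EFinM; congr EFin; field; exact: lt0r_neq0.
- exact: measurable_funM.
- by apply: measurable_funM => //; apply: measurable_funD => //; exact: measurable_funM.
apply: filterS w_gt0 => x wx; rewrite /= /V /= /pos_wealth wx.
have cE : c x = u * (wealth c u t x + t - 1) / t.
  by rewrite /wealth; field; rewrite !lt0r_neq0.
rewrite cE; set w := wealth c u t x; field.
by rewrite ?(lt0r_neq0 t0) ?(lt0r_neq0 wx).
Qed.

Variables (c' : T -> R) (u' t' : R).
Hypotheses (mc' : measurable_fun [set: T] c') (c'0 : forall x, 0 <= c' x).
Hypotheses (u'0 : 0 < u') (t'0 : 0 < t').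
Hypothesis sol' : wealth_solution P r c' u' t'.

Lemma le_expectation_div_pos_wealth : (u'%:E <= 'E_P[c' \* V])%E.
Proof.
case: sol => _ lnL Eln EV; case: sol' => w'_gt0 lnL' Eln' _.
have mQ : measurable_fun [set: T] (c' \* V) by exact: measurable_funM.
have Q0 x : 0 <= (c' \* V) x.
  by rewrite /= mulr_ge0 // invr_ge0 ltW // pos_wealth_gt0.
have [->|] := eqVneq 'E_P[c' \* V]%E +oo%E; first by rewrite leey.
rewrite -ltey -ge0_fin_numE ?expectation_ge0 // => J_fin.
have EJ := fineK J_fin; set J := fine _ in EJ.
have QL : c' \* V \in Lfun P 1 by exact: fin_expectation_Lfun1.
pose W := pos_wealth c' u' t' \* V.
have mW : measurable_fun [set: T] W.
  by apply: measurable_funM => //; exact: measurable_pos_wealth.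
have EW : ('E_P[W] = ((1 - t') + t' / u' * J)%:E)%E.
  rewrite (@ae_eq_expectation _ _ _ _ _ ((1 - t') \o* V \+ (t' / u') \o* (c' \* V))).
  - rewrite expectationD ?expectationZl ?EV ?mule1 //; try exact: Lfun_scale.
    by rewrite -EJ -EFinM -EFinD; congr EFin; ring.
  - exact: mW.
  - by apply: measurable_funD; apply: measurable_funM.
  apply: filterS w'_gt0 => x wx; rewrite /W /= /pos_wealth wx /wealth.
  by field; rewrite lt0r_neq0.
have WL : W \in Lfun P 1 by apply: fin_expectation_Lfun1; rewrite // EW.
have ln_le x : @ln R (pos_wealth c' u' t' x) <= ln (pos_wealth c u t x) + W x - 1.
  have := ln_le_subr1 (divr_gt0 (pos_wealth_gt0 c' u' t' x) (pos_wealth_gt0 c u t x)).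
  rewrite ln_div ?posrE ?pos_wealth_gt0 // /W /V /=; lra.
have lnWL : (@ln R \o pos_wealth c u t \+ W \- cst 1) \in Lfun P 1.
  by apply: rpredB; [exact: rpredD | exact: Lfun_cst].
have := le_expectation lnL' lnWL ln_le.
rewrite Eln' expectationB ?expectationD ?Eln ?EW ?expectation_cst ?rpredD //;
  last exact: Lfun_cst.
rewrite -EJ -EFinD !lee_fin => h.
have : t' * u' <= t' * J.
  have -> : t' * J = t' / u' * J * u' by field; exact: lt0r_neq0.
  by rewrite ler_pM2r //; lra.
by rewrite ler_pM2l.
Qed.

End wealth_bounds.

Section game_value.
Variables (R : realType) (F : probability R R) (a b : R -> R) (r : R).
Hypotheses (ma : measurable_fun [set: R] a) (mb : measurable_fun [set: R] b).
Hypotheses (a0 : forall x, 0 <= a x) (b0 : forall x, 0 <= b x).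
Hypothesis g_ex : forall p, 0 <= p <= 1 -> exists u, g_sol F a b r p u.

Lemma measurable_cp p : measurable_fun [set: R] (cp a b p).
Proof. by apply: measurable_funD; apply: measurable_funM. Qed.

Lemma cp_ge0 p x : 0 <= p <= 1 -> 0 <= cp a b p x.
Proof. by case/andP=> p0 p1; rewrite addr_ge0 // mulr_ge0 // subr_ge0. Qed.

Lemma g_wealth_solution p : 0 <= p <= 1 ->
  0 < g F a b r p /\ exists2 t, 0 < t & wealth_solution F r (cp a b p) (g F a b r p) t.
Proof.
move=> p01; have [u0 [t [/andP[t0 _] [hE hfoc]]]] := xgetPex 0 (g_ex p01).
split => //; exists t => //.
exact: wealth_solution_of_system (measurable_cp p) u0 t0 hE hfoc.
Qed.

Lemma g_concave : concave_on01 (g F a b r).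
Proof.
move=> x y l x01 y01 l01; set p := l * x + (1 - l) * y.
have p01 : 0 <= p <= 1.
  move: x01 y01 l01 => /andP[x0 x1] /andP[y0 y1] /andP[l0 l1].
  have l'0 : 0 <= 1 - l by rewrite subr_ge0.
  apply/andP; split; first by rewrite addr_ge0 // mulr_ge0.
  have -> : 1 = l * 1 + (1 - l) * 1 :> R by ring.
  by rewrite lerD // ler_wpM2l.
have [up [tp tp0 solp]] := g_wealth_solution p01.
set V := GRing.inv \o pos_wealth (cp a b p) (g F a b r p) tp.
have mcpV z : measurable_fun [set: R] (cp a b z \* V).
  apply: measurable_funM; first exact: measurable_cp.
  exact: measurable_inv_pos_wealth (measurable_cp p).
have cpV_ge0 z : 0 <= z <= 1 -> forall w, 0 <= (cp a b z \* V) w.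
  by move=> z01 w; rewrite /= mulr_ge0 ?cp_ge0 // invr_ge0 ltW // pos_wealth_gt0.
have g_le z : 0 <= z <= 1 -> ((g F a b r z)%:E <= 'E_F[cp a b z \* V])%E.
  move=> z01; have [uz [tz tz0 solz]] := g_wealth_solution z01.
  exact: (le_expectation_div_pos_wealth (measurable_cp p) solp
    (measurable_cp z) (fun w => cp_ge0 w z01) uz tz0 solz).
rewrite -lee_fin -(expectation_div_pos_wealth (measurable_cp p) up tp0 solp) -/V.
have -> : cp a b p \* V = l \o* (cp a b x \* V) \+ (1 - l) \o* (cp a b y \* V).
  by apply: funext => w; rewrite /= /p /cp; ring.
rewrite (ge0_expectation_conv F (mcpV x) (mcpV y) (cpV_ge0 _ x01) (cpV_ge0 _ y01) l01).
case/andP: l01 => l0 l1; rewrite EFinD !EFinM.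
by apply: leeD; apply: lee_wpmul2l; rewrite ?lee_fin ?subr_ge0 ?g_le.
Qed.

End game_value.

Theorem lemmaD9 (R : realType) (F : probability R R) (a b : R -> R) (r : R) :
  game F a -> game F b ->
  (forall p : R, 0 <= p <= 1 -> exists u : R, g_sol F a b r p u) ->
  concave_on01 (g F a b r).
Proof. by move=> [ma [a0 _]] [mb [b0 _]] g_ex; exact: g_concave g_ex. Qed.
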